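(* Let $\pi$ be a stationary deterministic memoryless policy, $\hat q:\mathcal{S}\times\mathcal{A}\to\mathbb{R}$, $\omega>0$, $\Delta\ge0$, $\mathcal{S}_{\text{fix}}\subseteq\mathcal{S}$, and $\pi'=\pi_{\hat q,\pi,\mathcal{S}_{\text{fix}}}$. Assume $|\hat q(s,a)-q^\pi(s,a)|\le\omega$ for all $s\in\mathcal{S}\setminus\mathcal{S}_{\text{fix}}$ and $a\in\mathcal{A}$, and that $\pi$ is next-state $\Delta$-optimal on $\mathcal{S}\setminus\mathcal{S}_{\text{fix}}$. Then $\pi'$ is $(4\omega+\gamma\Delta)$-optimal on $\mathcal{S}\setminus\mathcal{S}_{\text{fix}}$.
   Context: An MDP is $M=(\mathcal{S},\mathcal{A},\mathcal{Q})$ with measurable state space $\mathcal{S}$, finite action set $\mathcal{A}=(\mathcal{A}_1,\dots,\mathcal{A}_{|\mathcal{A}|})$ (with a fixed ordering), and transition-reward kernel $\mathcal{Q}$ with marginals $P(\cdot|s,a)$ (next state) and reward distribution supported on $[0,1]$, $r(s,a)$ the mean reward; discount $\gamma\in(0,1)$. $v^\pi(s)=\mathbb{E}_{\pi,s}[\sum_{t\ge0}\gamma^tR_t]$, $q^\pi(s,a)=\mathbb{E}_{\pi,s,a}[\sum_{t\ge0}\gamma^tR_t]$; $v^\star=\sup_\pi v^\pi$ (attained by a stationary deterministic policy). A policy $\pi$ is $\Delta$-optimal on $\mathcal{S}'\subseteq\mathcal{S}$ if $v^\star(s)-v^\pi(s)\le\Delta$ for all $s\in\mathcal{S}'$; it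 is next-state $\Delta$-optimal on $\mathcal{S}'$ if $\int(v^\star(s')-v^\pi(s'))\,dP(s'|s,a)\le\Delta$ for all $s\in\mathcal{S}'$, $a\in\mathcal{A}$. CAPI update: $\pi_{\hat q,\pi,\mathcal{S}_{\text{fix}}}(s)=\arg\max_{a}\hat q(s,a)$ (ties broken by smallest index) if $s\notin\mathcal{S}_{\text{fix}}$ and $\hat q(s,\pi(s))+\omega<\max_a\hat q(s,a)-\omega$, and $=\pi(s)$ otherwise. *)

From HB Require Import structures.
From mathcomp Require Import all_boot all_order all_algebra.
From mathcomp Require Import all_classical all_reals all_analysis measurable_realfun.
Set Implicit Arguments. Unset Strict Implicit. Unset Printing Implicit Defensive.
Import Order.TTheory GRing.Theory Num.Theory.
Import numFieldNormedType.Exports.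
Local Open Scope classical_set_scope.
Local Open Scope ring_scope.

Section MDP.
Context {R : realType} {d : measure_display} {S : measurableType d} {k : nat}.
(* Action set A = 'I_k.+1 = (A_1, ..., A_{k+1}) ordered by index. *)
Notation Act := 'I_k.+1.

Definition is_kernel (P : S -> Act -> probability S R) : Prop :=
  forall (a : Act) (U : set S), measurable U ->
    measurable_fun [set: S] (fun s => P s a U : \bar R).

(* r s a : mean reward, rewards supported on [0,1] *)
Definition is_reward (r : S -> Act -> R) : Prop :=
  (forall s a, 0 <= r s a <= 1) /\ (forall a, measurable_fun setT (r ^~ a)).

Definition measurable_policy (pi : S -> Act) : Prop :=
  forall a : Act, measurable (pi @^-1` [set a]).

Variables (P : S -> Act -> probability S R) (r : S -> Act -> R) (gamma : R).

Definition Ppi (pi : S -> Act) (f : S -> R) : S -> R :=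
  fun s => \int[P s (pi s)]_(y in setT) f y.

(* E_{pi,s}[R_t] = (P_pi^t r_pi)(s) *)
Definition vterm (pi : S -> Act) (t : nat) : S -> R :=
  iter t (Ppi pi) (fun s => r s (pi s)).

Definition vpi (pi : S -> Act) (s : S) : R :=
  limn (series (fun t => gamma ^+ t * vterm pi t s)).

(* E_{pi,s,a}[R_t]: R_0 has mean r s a, later rewards follow pi *)
Definition qterm (pi : S -> Act) (s : S) (a : Act) (t : nat) : R :=
  match t with
  | 0 => r s a
  | t'.+1 => \int[P s a]_(y in setT) vterm pi t' y
  end.

Definition qpi (pi : S -> Act) (s : S) (a : Act) : R :=
  limn (series (fun t => gamma ^+ t * qterm pi s a t)).

(* v^*(s) = sup over (stationary deterministic) policies of v^pi(s) *)
Definition vstar (s : S) : R :=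
  sup [set vpi mu s | mu in measurable_policy].

Definition optimal_on (S' : set S) (Delta : R) (pi : S -> Act) : Prop :=
  forall s, S' s -> vstar s - vpi pi s <= Delta.

Definition next_state_optimal_on (S' : set S) (Delta : R) (pi : S -> Act) : Prop :=
  forall s, S' s -> forall a : Act,
    \int[P s a]_(y in setT) (vstar y - vpi pi y) <= Delta.

End MDP.

Definition maxA {R : realType} {k : nat} (f : 'I_k.+1 -> R) : R :=
  \big[Num.max/f ord0]_(i : 'I_k.+1) f i.

(* argmax with ties broken by the smallest index *)
Definition first_argmax {R : realType} {k : nat} (f : 'I_k.+1 -> R) : 'I_k.+1 :=
  odflt ord0 [pick i : 'I_k.+1 |
    [forall j : 'I_k.+1, (f j <= f i) && ((j < i)%N ==> (f j < f i))]].

Definition capi {R : realType} {T : Type} {k : nat}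
  (omega : R) (qhat : T -> 'I_k.+1 -> R) (pi : T -> 'I_k.+1) (Sfix : set T)
  (s : T) : 'I_k.+1 :=
  if (s \notin Sfix) && (qhat s (pi s) + omega < maxA (qhat s) - omega)
  then first_argmax (qhat s) else pi s.

From Pilot Require Import Defs.
From HB Require Import structures.
From mathcomp Require Import all_boot all_order all_algebra.
From mathcomp Require Import all_classical all_reals all_analysis measurable_realfun.
From mathcomp Require Import lra.
Import Order.TTheory GRing.Theory Num.Theory.
Import numFieldNormedType.Exports.
Local Open Scope classical_set_scope.
Local Open Scope ring_scope.

(** Policy improvement: wherever CAPI switches action, the [omega]-accurate
  estimates certify that the new action is better for [q^pi], so
  [v^pi s <= q^pi(s, pi' s)] everywhere.  The bounded function
  [D = v^pi - v^pi'] then satisfies [D <= gamma P_pi' D], whence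
  [sup D <= gamma sup D] and [v^pi <= v^pi'].  Finally, for [s] outside
  [Sfix] and [a = pi* s],
  [v* s = q^pi(s,a) + gamma \int (v* - v^pi) dP(s,a) <= q^pi(s,a) + gamma Delta],
  [v^pi' s >= q^pi(s, pi' s)], and the estimates give
  [q^pi(s,a) <= q^pi(s, pi' s) + 4 omega]. *)

Section ProbabilityIntegral.
Context {R : realType} {d : measure_display} {S : measurableType d}.
Variable mu : probability S R.

Lemma probability_integrable_bounded (f : S -> R) (B : R) :
  measurable_fun setT f -> (forall y, `|f y| <= B) ->
  mu.-integrable setT (EFin \o f).
Proof.
move=> mf fB; apply: measurable_bounded_integrable => //.
  by rewrite [X in (X < _)%E]probability_setT ltry.
exists B; split; first by rewrite num_real.
by move=> M BM y _; apply: le_trans (fB y) (ltW BM).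
Qed.

Lemma Rintegral_probability_cst (c : R) : \int[mu]_(y in setT) c = c.
Proof.
rewrite Rintegral_cst //.
by have := @probability_setT _ _ _ mu => /= ->; rewrite mulr1.
Qed.

Lemma Rintegral_probability_bounds (f : S -> R) (a b : R) :
  measurable_fun setT f -> (forall y, a <= f y <= b) ->
  a <= \int[mu]_(y in setT) f y <= b.
Proof.
move=> mf fab.
have cst_int (c : R) : mu.-integrable setT (EFin \o cst c).
  exact: (@probability_integrable_bounded _ `|c|).
have f_int : mu.-integrable setT (EFin \o f).
  apply: (@probability_integrable_bounded _ (`|a| + `|b|)) => // y.
  have /andP[ay yb] := fab y; rewrite ler_norml.
  have := lerNnormlW (lexx `|a|); have := ler_norm b.
  have := normr_ge0 a; have := normr_ge0 b.
  by move=> *; apply/andP; split; lra.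
rewrite -[X in X <= _ <= _]Rintegral_probability_cst.
rewrite -[X in _ <= _ <= X]Rintegral_probability_cst.
apply/andP; split; apply: le_Rintegral => //; try exact: cst_int.
  by move=> y _; case/andP: (fab y).
by move=> y _; case/andP: (fab y).
Qed.

End ProbabilityIntegral.

Lemma measurable_Rintegral_kernel {R : realType} {d : measure_display}
    {S : measurableType d} {k : nat} (P : S -> 'I_k.+1 -> probability S R)
    (a : 'I_k.+1) (f : S -> R) :
  is_kernel P -> measurable_fun setT f -> (forall y, 0 <= f y) ->
  measurable_fun setT (fun s => \int[P s a]_(y in setT) f y).
Proof.
move=> hP mf f0; apply: measurableT_comp => //.
apply: (measurable_fun_integral_kernel
  (l := fun s => (P s a : {measure set S -> \bar R}))).
- by move=> U mU; exact: hP.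
- by move=> y; rewrite lee_fin.
- exact/measurable_EFinP.
Qed.

Lemma le0_of_le_discounted_mean {R : realType} {d : measure_display}
    {S : measurableType d} (gamma : R) (m : S -> probability S R)
    (D : S -> R) (B : R) :
  0 <= gamma < 1 -> measurable_fun setT D -> (forall y, `|D y| <= B) ->
  (forall y, D y <= gamma * \int[m y]_(z in setT) D z) -> forall y, D y <= 0.
Proof.
move=> /andP[gamma_ge0 gamma_lt1] mD DB Dsub y0.
have D_ne0 : range D !=set0 by exists (D y0), y0.
have D_ub : has_ubound (range D).
  by exists B => _ [y _ <-]; exact: le_trans (ler_norm _) (DB y).
set M := sup (range D).
have le_M y : D y <= M by apply: ub_le_sup D_ub _ _; exists y.
have mean_le_M y : \int[m y]_(z in setT) D z <= M.
  have DBM z : - B <= D z <= M.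
    by rewrite le_M andbT; move: (DB z); rewrite ler_norml => /andP[].
  by case/andP: (Rintegral_probability_bounds (m y) _ _ _ mD DBM).
have M_le : M <= gamma * M.
  apply: ge_sup D_ne0 _ => _ [y _ <-].
  exact: le_trans (Dsub y) (ler_wpM2l gamma_ge0 (mean_le_M y)).
have : M <= 0 by nra.
exact: le_trans (le_M y0).
Qed.

Section Measurability.
Context {d : measure_display} {S : measurableType d} {k : nat}.

Lemma measurable_fun_policy {R : realType} (g : S -> 'I_k.+1 -> R)
    (pi : S -> 'I_k.+1) :
  measurable_policy pi -> (forall a, measurable_fun setT (g ^~ a)) ->
  measurable_fun setT (fun s => g s (pi s)).
Proof.
move=> mpi mg.
have -> : (fun s => g s (pi s)) =
    (fun s => \sum_(a < k.+1) \1_(pi @^-1` [set a]) s * g s a).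
  apply/funext => s; rewrite (bigD1 (pi s)) //= indicE mem_set // mul1r.
  rewrite big1 ?addr0 // => a /negbTE api.
  by rewrite indicE memNset ?mul0r //= => pia; rewrite pia eqxx in api.
by apply: measurable_sum => a; apply: measurable_funM.
Qed.

Lemma measurable_policy_if (c : S -> bool) (pi1 pi2 : S -> 'I_k.+1) :
  measurable_fun setT c -> measurable_policy pi1 -> measurable_policy pi2 ->
  measurable_policy (fun s => if c s then pi1 s else pi2 s).
Proof.
move=> mc mpi1 mpi2 a.
have mcb b : measurable (c @^-1` [set b]).
  by have := mc measurableT [set b] I; rewrite setTI.
have -> : (fun s => if c s then pi1 s else pi2 s) @^-1` [set a] =
    (c @^-1` [set true] `&` pi1 @^-1` [set a]) `|`
    (c @^-1` [set false] `&` pi2 @^-1` [set a]).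
  apply/seteqP; split => s /=; case: (c s) => /=.
  - by move=> pi1a; left.
  - by move=> pi2a; right.
  - by case=> -[].
  - by case=> -[].
by apply: measurableU; apply: measurableI.
Qed.

Lemma measurable_fun_forall_fin (I : finType) (p : S -> I -> bool) :
  (forall i, measurable_fun setT (p ^~ i)) ->
  measurable_fun setT (fun s => [forall i, p s i]).
Proof.
move=> mp.
have -> : (fun s => [forall i, p s i]) = (fun s => all (p s) (enum I)).
  apply/funext => s; apply/forallP/allP => [ps i _ | ps i]; first exact: ps.
  by apply: ps; rewrite mem_enum.
elim: (enum I) => [|i l IH] /=; first exact: measurable_cst.
exact: measurable_and.
Qed.

Lemma measurable_maxA {R : realType} (f : S -> 'I_k.+1 -> R) :
  (forall a, measurable_fun setT (f ^~ a)) ->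
  measurable_fun setT (fun s => Defs.maxA (f s)).
Proof.
move=> mf; rewrite /Defs.maxA.
elim: (index_enum 'I_k.+1) => [|i l IH].
  by under eq_fun do rewrite big_nil; exact: mf.
under eq_fun do rewrite big_cons.
exact: measurable_maxr.
Qed.

End Measurability.

Section FirstArgmax.
Context {R : realType} {k : nat}.
Implicit Types (f : 'I_k.+1 -> R) (i j : 'I_k.+1).

Definition is_first_argmax f i :=
  [forall j, (f j <= f i) && ((j < i)%N ==> (f j < f i))].

Lemma exists_first_argmax f : exists i, is_first_argmax f i.
Proof.
case: (@arg_maxP _ _ _ ord0 predT f isT) => i0 _ i0_max.
have [i /eqP fi first_i] :=
  @arg_minnP _ i0 (fun i => f i == f i0) (fun i => nat_of_ord i) (eqxx _).
have {}i0_max j : f j <= f i0 := i0_max j isT.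
exists i; apply/forallP => j; rewrite fi i0_max /=.
apply/implyP => ji; rewrite lt_neqAle i0_max andbT.
by apply: contraTneq ji => /eqP/first_i; rewrite -leqNgt.
Qed.

Lemma first_argmaxP f : is_first_argmax f (first_argmax f).
Proof.
rewrite /first_argmax; case: pickP => [//|none].
by have [i] := exists_first_argmax f; rewrite /is_first_argmax none.
Qed.

Lemma first_argmax_unique f i j :
  is_first_argmax f i -> is_first_argmax f j -> i = j.
Proof.
move=> /forallP fi /forallP fj; apply/val_inj.
wlog ij : i j fi fj / (i < j)%N; last first.
  by have /andP[_ /implyP/(_ ij)] := fj i; have /andP[/le_gtF -> _] := fi j.
by case: (ltngtP i j) => [ij|ji|//] wl; [exact: wl | apply/esym/wl].
Qed.

Lemma first_argmax_eq f i : (first_argmax f == i) = is_first_argmax f i.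
Proof.
apply/eqP/idP => [<-|fi]; first exact: first_argmaxP.
exact: first_argmax_unique (first_argmaxP f) fi.
Qed.

Lemma first_argmax_maxA f : f (first_argmax f) = Defs.maxA f.
Proof.
apply/le_anti/andP; split; first exact: le_bigmax.
apply: bigmax_le => [|j _]; have /forallP fa := first_argmaxP f.
  by case/andP: (fa ord0).
by case/andP: (fa j).
Qed.

End FirstArgmax.

Lemma measurable_first_argmax {R : realType} {d : measure_display}
    {S : measurableType d} {k : nat} (f : S -> 'I_k.+1 -> R) :
  (forall a, measurable_fun setT (f ^~ a)) ->
  measurable_policy (fun s => first_argmax (f s)).
Proof.
move=> mf a.
have -> : (fun s => first_argmax (f s)) @^-1` [set a] =
    (fun s => is_first_argmax (f s) a) @^-1` [set true].
  by apply/seteqP; split => s /=; rewrite -first_argmax_eq => /eqP.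
have mfa : measurable_fun setT (fun s => is_first_argmax (f s) a).
  apply: measurable_fun_forall_fin => j; apply: measurable_and.
    exact: measurable_fun_ler.
  by case: (j < a)%N; [exact: measurable_fun_ltr | exact: measurable_cst].
by have := mfa measurableT [set true] I; rewrite setTI.
Qed.

Lemma measurable_capi {R : realType} {d : measure_display}
    {S : measurableType d} {k : nat} (omega : R) (qhat : S -> 'I_k.+1 -> R)
    (pi : S -> 'I_k.+1) (Sfix : set S) :
  measurable_policy pi -> (forall a, measurable_fun setT (qhat ^~ a)) ->
  measurable Sfix -> measurable_policy (capi omega qhat pi Sfix).
Proof.
move=> mpi mqhat mSfix; apply: measurable_policy_if => //; last first.
  exact: measurable_first_argmax.
apply: measurable_and.
  apply: measurable_neg; apply: (measurable_fun_bool true); rewrite setTI.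
  rewrite (_ : _ @^-1` _ = Sfix) //.
  by apply/seteqP; split => s /=; [move/set_mem | move/mem_set].
apply: measurable_fun_ltr.
  by apply: measurable_funD => //; exact: measurable_fun_policy.
by apply: measurable_funB => //; exact: measurable_maxA.
Qed.

Section CapiEstimates.
Context {R : realType} {T : Type} {k : nat}.
Context {omega : R} {qhat q : T -> 'I_k.+1 -> R} {Sfix : set T}.
Variable pi : T -> 'I_k.+1.
Hypothesis qhat_close :
  forall s a, ~ Sfix s -> `|qhat s a - q s a| <= omega.

Let close_bounds s a : ~ Sfix s ->
  q s a - omega <= qhat s a /\ qhat s a <= q s a + omega.
Proof.
by move=> /(qhat_close s a); rewrite ler_norml => /andP[lo hi]; split; lra.
Qed.

Lemma capi_ge_current s : q s (pi s) <= q s (capi omega qhat pi Sfix s).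
Proof.
rewrite /capi; case: ifP => [/andP[] | _] //.
rewrite notin_setE => nSs switch.
have [lo_pi _] := close_bounds s (pi s) nSs.
have [_ hi_new] := close_bounds s (first_argmax (qhat s)) nSs.
rewrite -first_argmax_maxA in switch; lra.
Qed.

Lemma capi_near_max s a : ~ Sfix s ->
  q s a <= q s (capi omega qhat pi Sfix s) + 4 * omega.
Proof.
move=> nSs; have [lo_a hi_a] := close_bounds s a nSs.
have le_max : qhat s a <= Defs.maxA (qhat s) by exact: le_bigmax.
have sSfix : s \notin Sfix by rewrite notin_setE.
rewrite /capi sSfix /=; case: ifP => [_ | /negbT].
  have [_ hi_new] := close_bounds s (first_argmax (qhat s)) nSs.
  rewrite -first_argmax_maxA in le_max; lra.
rewrite -leNgt => stay; have [_ hi_pi] := close_bounds s (pi s) nSs; lra.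
Qed.

End CapiEstimates.

Section DiscountedSeries.
Context {R : realType} {gamma : R} {u : R^nat}.
Hypothesis gamma01 : 0 <= gamma < 1.
Hypothesis u01 : forall t, 0 <= u t <= 1.

Let gamma_ge0 : 0 <= gamma. Proof. by case/andP: gamma01. Qed.

Let discounted_ge0 t : 0 <= gamma ^+ t * u t.
Proof. by case/andP: (u01 t) => u0 _; rewrite mulr_ge0 // exprn_ge0. Qed.

Let discounted_le_geometric t : gamma ^+ t * u t <= geometric 1 gamma t.
Proof.
by case/andP: (u01 t) => u0 u1; rewrite /= mul1r ler_piMr // exprn_ge0.
Qed.

Let cvg_geometric : series (geometric 1 gamma) @ \oo --> (1 - gamma)^-1.
Proof.
rewrite -[X in _ --> X]mul1r; apply: cvg_geometric_series.
by rewrite ger0_norm //; case/andP: gamma01.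
Qed.

Lemma is_cvg_discounted_series : cvgn (series (fun t => gamma ^+ t * u t)).
Proof.
apply: (series_le_cvg discounted_ge0 _ discounted_le_geometric).
  by move=> t; rewrite /= mul1r exprn_ge0.
exact: cvgP cvg_geometric.
Qed.

Lemma discounted_series_bounds :
  0 <= limn (series (fun t => gamma ^+ t * u t)) <= (1 - gamma)^-1.
Proof.
apply/andP; split.
  apply: limr_ge is_cvg_discounted_series _.
  by apply: nearW => n; apply: sumr_ge0 => t _.
rewrite -(cvg_lim _ cvg_geometric) //.
apply: lim_series_le is_cvg_discounted_series _ discounted_le_geometric.
exact: cvgP cvg_geometric.
Qed.

Lemma discounted_series_EFin :
  (limn (series (fun t => gamma ^+ t * u t)))%:E =
  (\sum_(t <oo) (gamma ^+ t * u t)%:E)%E.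
Proof.
rewrite -EFin_lim; last exact: is_cvg_discounted_series.
congr (lim (_ @ \oo)); apply/funext => n /=.
by rewrite sumEFin.
Qed.

End DiscountedSeries.

Lemma lim_seriesS {R : realType} (u : R^nat) : cvgn (series u) ->
  limn (series u) = u 0%N + limn (series (fun n => u n.+1)).
Proof.
move=> cu.
have -> : series (fun n => u n.+1) =
    (fun n => series u n.+1 - u 0%N).
  by apply/funext => n; rewrite /series /= big_nat_recl // addrC addKr.
have shifted :
    (fun n => series u n.+1 - u 0%N) @ \oo --> limn (series u) - u 0%N.
  by apply: cvgB; [rewrite (cvg_shiftS (series u)) | exact: cvg_cst].
by rewrite (cvg_lim _ shifted) // addrC subrK.
Qed.

Lemma Rintegral_discounted_series {R : realType} {d : measure_display}
    {S : measurableType d} (gamma : R) (mu : probability S R)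
    (f : nat -> S -> R) :
  0 <= gamma < 1 ->
  (forall t, measurable_fun setT (f t)) -> (forall t y, 0 <= f t y <= 1) ->
  \int[mu]_(y in setT) limn (series (fun t => gamma ^+ t * f t y)) =
  limn (series (fun t => gamma ^+ t * \int[mu]_(y in setT) f t y)).
Proof.
move=> gamma01 mf f01.
have gamma_ge0 : 0 <= gamma by case/andP: gamma01.
have int_f01 t : 0 <= \int[mu]_(y in setT) f t y <= 1.
  exact: Rintegral_probability_bounds.
have fterm_int t : mu.-integrable setT (EFin \o f t).
  apply: (@probability_integrable_bounded _ _ _ _ _ 1) => // y.
  by case/andP: (f01 t y) => f0 f1; rewrite ger0_norm.
apply: EFin_inj; rewrite discounted_series_EFin //.
rewrite /Rintegral fineK; last first.
  apply: integrable_fin_num => //.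
  apply: (@probability_integrable_bounded _ _ _ _ _ (1 - gamma)^-1).
    apply: (measurable_fun_cvg
      (h := fun n y => series (fun t => gamma ^+ t * f t y) n)).
      by move=> n; apply: measurable_sum => t; exact: measurable_funM.
    by move=> y _; exact: is_cvg_discounted_series.
  move=> y; have /andP[v0 v1] := discounted_series_bounds gamma01 (f01^~ y).
  by rewrite ger0_norm.
under eq_integral do rewrite discounted_series_EFin //.
rewrite integral_nneseries //; last 2 first.
- by move=> t; apply/measurable_EFinP; exact: measurable_funM.
- move=> t y _; rewrite lee_fin mulr_ge0 ?exprn_ge0 //.
  by case/andP: (f01 t y).
apply: eq_eseriesr => t _.
under eq_integral do rewrite EFinM.
have fin_int : (\int[mu]_(y in setT) (f t y)%:E)%E \is a fin_num.
  exact: integrable_fin_num (fterm_int t).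
by rewrite integralZl ?EFinM ?fineK //; exact: fterm_int.
Qed.

Section MDP.
Context {R : realType} {d : measure_display} {S : measurableType d} {k : nat}.
Context {P : S -> 'I_k.+1 -> probability S R} {r : S -> 'I_k.+1 -> R}
  {gamma : R}.
Hypotheses (hP : is_kernel P) (hr : is_reward r) (gamma01 : 0 <= gamma < 1).

Local Notation V := (vpi P r gamma).
Local Notation Q := (qpi P r gamma).

Lemma vpi_qpi mu s : V mu s = Q mu s (mu s).
Proof.
by rewrite /vpi /qpi; congr (limn (series _)); apply/funext => -[|t].
Qed.

Section FixedPolicy.
Context {mu : S -> 'I_k.+1}.
Hypothesis mmu : measurable_policy mu.

Lemma measurable_vterm_in01 t : measurable_fun setT (vterm P r mu t) /\
  (forall s, 0 <= vterm P r mu t s <= 1).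
Proof.
elim: t => [|t [mv v01]].
  by split; [exact: measurable_fun_policy hr.2 | move=> s; exact: hr.1].
split; last by move=> s; exact: Rintegral_probability_bounds.
apply: (measurable_fun_policy
  (fun s a => \int[P s a]_(y in setT) vterm P r mu t y)) => // a.
by apply: measurable_Rintegral_kernel => // y; case/andP: (v01 y).
Qed.

Lemma measurable_vpi : measurable_fun setT (V mu).
Proof.
apply: (measurable_fun_cvg
  (h := fun n s => series (fun t => gamma ^+ t * vterm P r mu t s) n)).
  move=> n; apply: measurable_sum => t; apply: measurable_funM => //.
  exact: (measurable_vterm_in01 t).1.
move=> s _; apply: is_cvg_discounted_series => // t.
exact: (measurable_vterm_in01 t).2.
Qed.

Lemma vpi_bounds s : 0 <= V mu s <= (1 - gamma)^-1.
Proof.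
by apply: discounted_series_bounds => // t; exact: (measurable_vterm_in01 t).2.
Qed.

Lemma integrable_vpi (m : probability S R) : m.-integrable setT (EFin \o V mu).
Proof.
apply: (probability_integrable_bounded m _ (1 - gamma)^-1 measurable_vpi) => s.
by have /andP[v0 v1] := vpi_bounds s; rewrite ger0_norm.
Qed.

Lemma qpi_bellman s a :
  Q mu s a = r s a + gamma * \int[P s a]_(y in setT) V mu y.
Proof.
have mv t := (measurable_vterm_in01 t).1.
have v01 t := (measurable_vterm_in01 t).2.
have int_v01 t : 0 <= \int[P s a]_(y in setT) vterm P r mu t y <= 1.
  exact: Rintegral_probability_bounds.
have qterm01 t : 0 <= qterm P r mu s a t <= 1.
  by case: t => [|t] /=; [exact: hr.1 | exact: int_v01].
rewrite /qpi lim_seriesS; last exact: is_cvg_discounted_series.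
rewrite expr0 mul1r /vpi Rintegral_discounted_series //; congr (_ + _).
have -> : (fun n => gamma ^+ n.+1 * qterm P r mu s a n.+1) =
    gamma *: (fun t => gamma ^+ t * \int[P s a]_(y in setT) vterm P r mu t y).
  by apply/funext => n; rewrite exprS -mulrA.
by rewrite lim_seriesZ //; exact: is_cvg_discounted_series.
Qed.

End FixedPolicy.

Lemma qpi_sub mu nu : measurable_policy mu -> measurable_policy nu ->
  forall s a, Q mu s a - Q nu s a =
    gamma * \int[P s a]_(y in setT) (V mu y - V nu y).
Proof.
move=> mmu mnu s a.
rewrite !qpi_bellman // RintegralB //; try exact: integrable_vpi.
by rewrite mulrBr opprD addrACA subrr add0r.
Qed.

Lemma policy_improvement pi pi' :
  measurable_policy pi -> measurable_policy pi' ->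
  (forall s, V pi s <= Q pi s (pi' s)) -> forall s, V pi s <= V pi' s.
Proof.
move=> mpi mpi' improve s; rewrite -subr_le0; move: s.
apply: (le0_of_le_discounted_mean _ (fun y => P y (pi' y))
  (fun y => V pi y - V pi' y) (1 - gamma)^-1 gamma01).
- by apply: measurable_funB; exact: measurable_vpi.
- move=> y; have /andP[v0 v1] := vpi_bounds mpi y.
  have /andP[v0' v1'] := vpi_bounds mpi' y.
  by rewrite ler_norml; apply/andP; split; lra.
- by move=> y; rewrite -qpi_sub // [V pi' y]vpi_qpi lerD2r.
Qed.

End MDP.

Theorem lemma3p4 (R : realType) (d : measure_display) (S : measurableType d)
  (k : nat) (P : S -> 'I_k.+1 -> probability S R) (r : S -> 'I_k.+1 -> R)
  (gamma : R)
  (hP : is_kernel P) (hr : is_reward r) (hgamma : 0 < gamma < 1)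
  (hstar : exists pistar : S -> 'I_k.+1, measurable_policy pistar /\
             forall s, vpi P r gamma pistar s = vstar P r gamma s)
  (pi : S -> 'I_k.+1) (hpi : measurable_policy pi)
  (qhat : S -> 'I_k.+1 -> R) (hqhat : forall a, measurable_fun setT (qhat ^~ a))
  (omega Delta : R) (Sfix : set S) (hSfix : measurable Sfix) :
  0 < omega -> 0 <= Delta ->
  (forall s a, ~ Sfix s -> `|qhat s a - qpi P r gamma pi s a| <= omega) ->
  next_state_optimal_on P r gamma (~` Sfix) Delta pi ->
  optimal_on P r gamma (~` Sfix) (4 * omega + gamma * Delta)
    (capi omega qhat pi Sfix).
Proof.
move=> _ _ qhat_close ns_opt s nSs.
(* [lra] is run on abstract reals: on the integral terms below it is
   prohibitively slow. *)
have combine (qs qa qn qb g1 g2 gD : R) : qs - qa = g1 -> qn - qb = g2 ->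
    0 <= g2 -> g1 <= gD -> qa <= qb + 4 * omega -> qs - qn <= 4 * omega + gD.
  by move=> *; lra.
have gamma01 : 0 <= gamma < 1 by case/andP: hgamma => /ltW -> ->.
have gamma_ge0 : 0 <= gamma by case/andP: gamma01.
have [pistar [mpistar vstarE]] := hstar.
have {}vstarE : vstar P r gamma = vpi P r gamma pistar.
  by apply/funext => y; rewrite vstarE.
set pi' := capi omega qhat pi Sfix.
have mpi' : measurable_policy pi' by exact: measurable_capi.
have improved y : vpi P r gamma pi y <= vpi P r gamma pi' y.
  apply: (policy_improvement hP hr gamma01 _ _ hpi mpi') => {}y.
  by rewrite vpi_qpi; exact: capi_ge_current.
have near_max := capi_near_max pi qhat_close s (pistar s) nSs.
have next_gap := ns_opt s nSs (pistar s); rewrite vstarE in next_gap.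
have star_gap := qpi_sub hP hr gamma01 _ _ mpistar hpi s (pistar s).
have new_gap := qpi_sub hP hr gamma01 _ _ mpi' hpi s (pi' s).
have new_gap_ge0 : 0 <= gamma * \int[P s (pi' s)]_(y in setT)
    (vpi P r gamma pi' y - vpi P r gamma pi y).
  rewrite mulr_ge0 // Rintegral_ge0 // => y _.
  by rewrite subr_ge0; exact: improved.
have scaled_gap := ler_wpM2l gamma_ge0 next_gap.
rewrite vstarE (vpi_qpi pistar) (vpi_qpi pi').
exact: combine star_gap new_gap new_gap_ge0 scaled_gap near_max.
Qed.
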